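(* Let $X$ be a topological space with base point $x_0$ such that there exists a nonconstant (nontrivial) path in $X$ starting at $x_0$. Let $\Omega X=\{\alpha:[0,1]\to X \text{ continuous}:\alpha(0)=\alpha(1)=x_0\}$ with the compact-open topology, and $\Omega_{\mathrm{tf}}=\{\alpha\in\Omega X: \alpha(t)=\alpha(1-t)\ \text{for all } t\in[0,1]\}$. Then the inclusion $\Omega X\setminus\Omega_{\mathrm{tf}}\hookrightarrow\Omega X$ is a homotopy equivalence. *)

From HB Require Import structures.
From mathcomp Require Import all_boot all_order all_algebra.
From mathcomp Require Import all_classical all_reals all_analysis.
Set Implicit Arguments. Unset Strict Implicit. Unset Printing Implicit Defensive.
Import Order.TTheory GRing.Theory Num.Theory numFieldNormedType.Exports.
Local Open Scope classical_set_scope.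
Local Open Scope ring_scope.

Definition uI (R : realType) : set R := [set t | 0 <= t <= 1].
Notation II R := (set_type (@uI R)).

Definition is_path (R : realType) (X : topologicalType) (g : II R -> X) :=
  continuous g.

Definition loops (R : realType) (X : topologicalType) (x0 : X)
  : set {compact-open, II R -> X} :=
  [set a | continuous (a : II R -> X) /\
           (forall t : II R, set_val t = 0 -> a t = x0) /\
           (forall t : II R, set_val t = 1 -> a t = x0)].

Definition Omega (R : realType) (X : topologicalType) (x0 : X) : topologicalType :=
  set_type (@loops R X x0).

Definition tf (R : realType) (X : topologicalType) (x0 : X) : set (@Omega R X x0) :=
  [set a | forall s t : II R, set_val s = 1 - set_val t ->
       (set_val a : II R -> X) s = (set_val a : II R -> X) t].

Definition Omega_ntf (R : realType) (X : topologicalType) (x0 : X) : topologicalType :=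
  set_type (~` @tf R X x0).

Definition homotopic (R : realType) (Y Z : topologicalType) (f g : Y -> Z) :=
  exists H : Y * II R -> Z, continuous H /\
    (forall y (t : II R), set_val t = 0 -> H (y, t) = f y) /\
    (forall y (t : II R), set_val t = 1 -> H (y, t) = g y).

Definition homotopy_equivalence (R : realType) (Y Z : topologicalType) (f : Y -> Z) :=
  continuous f /\ exists g : Z -> Y, continuous g /\
    homotopic R (g \o f) idfun /\ homotopic R (f \o g) idfun.

(* For a path g from x0 and s in [0, 1], whiskering replaces a loop a by the loop
   that first runs along g out to g(s) and back during [0, s/4], and then runs a
   sped up by the factor 1 + s about the midpoint 1/2, resting at x0 before and
   after.  The speed-up commutes with t |-> 1 - t, so whiskering never makes a
   loop time-flip symmetric.  For s = 1 the result is never symmetric: if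
   g(u) <> x0, the loop is at g(u) at time u/8, but at the mirror time 1 - u/8 it
   already rests at x0.  Hence s = 1 gives a map Omega X -> Omega X \ Omega_tf,
   and the whiskering parameter s is a homotopy from the identity to each
   composite of this map with the inclusion. *)

From HB Require Import structures.
From mathcomp Require Import all_boot all_order all_algebra.
From mathcomp Require Import all_classical all_reals all_analysis.
From mathcomp Require Import lra.
Import Order.TTheory GRing.Theory Num.Theory numFieldNormedType.Exports.
Local Open Scope classical_set_scope.
Local Open Scope ring_scope.

Lemma continuous_if_le {R : realType} {Y Z : topologicalType}
    (p q : Y -> R) (f g : Y -> Z) :
  continuous p -> continuous q -> continuous f -> continuous g ->
  (forall y, p y = q y -> f y = g y) ->
  continuous (fun y => if p y <= q y then f y else g y).
Proof.
move=> cp cq cf cg fg y U Uy.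
suff : \forall z \near y, U (if p z <= q z then f z else g z) by [].
have cd : (fun z => p z - q z) @ y --> p y - q y by apply: cvgD (cp y) (cvgN (cq y)).
move: Uy; have [pq|pq|pq] := ltgtP (p y) (q y) => Uy.
- have lt_near : \forall z \near y, p z - q z < 0.
    by apply: (@cvgr_lt R Y (nbhs y) _ _ _ cd); rewrite subr_lt0.
  near=> z; rewrite -subr_le0 ltW; last by near: z.
  by near: z; exact: cf.
- have gt_near : \forall z \near y, 0 < p z - q z.
    by apply: (@cvgr_gt R Y (nbhs y) _ _ _ cd); rewrite subr_gt0.
  near=> z; rewrite -subr_le0 leNgt ifN ?negbK; last by near: z.
  by near: z; exact: cg.
- have Ugy : nbhs (g y) U by rewrite -fg.
  near=> z; case: ifP => _; near: z; [exact: cf | exact: cg].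
Unshelve. all: by end_near.
Qed.

Lemma continuous_pair {T U V : topologicalType} (f : T -> U) (g : T -> V) :
  continuous f -> continuous g -> continuous (fun z => (f z, g z)).
Proof. by move=> cf cg z; apply: cvg_pair; [exact: cf | exact: cg]. Qed.

Lemma continuous_eval_subspace {V W : topologicalType}
    (A : set {compact-open, V -> W}) :
  locally_compact [set: V] -> regular_space V -> A `<=` [set f | continuous f] ->
  continuous (fun z : set_type A * V => set_val z.1 z.2).
Proof.
move=> lcV regV Acts.
have Acts_val (a : set_type A) : continuous (set_val a : V -> W).
  exact: Acts _ (set_valP a).
have cval : continuous (set_val : set_type A -> {compact-open, V -> W}).
  exact: initial_continuous.
have := continuous_uncurry_regular lcV regV cval Acts_val.
suff -> : (fun z : set_type A * V => set_val z.1 z.2) =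
  uncurry (fun a : set_type A => set_val a : V -> W) by [].
by apply/funext => -[].
Qed.

Section unit_interval.
Context {R : realType}.
Implicit Types (x : R) (t : II R).

Lemma unit_interval_bounds t : 0 <= set_val t <= 1.
Proof. exact: (set_valP t). Qed.

Lemma clamp01_subproof x : uI (Num.min 1 (Num.max 0 x)).
Proof. by rewrite /uI /= le_min ler01 le_max lexx ge_min lexx. Qed.

Definition clamp01 x : II R := SigSub (mem_set (clamp01_subproof x)).

Lemma clamp01E x : set_val (clamp01 x) = Num.min 1 (Num.max 0 x).
Proof. by []. Qed.

Lemma clamp01_id x : 0 <= x <= 1 -> set_val (clamp01 x) = x.
Proof. by case/andP => x_ge0 x_le1; rewrite clamp01E max_r // min_r. Qed.

Lemma clamp01_le0 x : x <= 0 -> set_val (clamp01 x) = 0.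
Proof. by move=> x_le0; rewrite clamp01E max_l // min_r. Qed.

Lemma clamp01_ge1 x : 1 <= x -> set_val (clamp01 x) = 1.
Proof. by move=> x_ge1; rewrite clamp01E max_r ?min_l // (le_trans ler01). Qed.

Lemma clamp01_val t : clamp01 (set_val t) = t.
Proof. by apply: val_inj; rewrite -!set_valE clamp01_id // unit_interval_bounds. Qed.

Lemma unit_interval_val1 t : set_val t = 1 -> t = clamp01 1.
Proof. by move=> t1; rewrite -[t]clamp01_val t1. Qed.

Lemma continuous_clamp01 : continuous clamp01.
Proof.
apply: continuous_comp_initial => x.
have cmax := max_fun_continuous (@cst_continuous R R 0) (fun y : R => @cvg_id _ (nbhs y)).
exact: min_fun_continuous (@cst_continuous R R 1) cmax x.
Qed.

Lemma compact_unit_interval : compact [set: II R].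
Proof.
have -> : [set: II R] = clamp01 @` `[0, 1].
  apply/seteqP; split => // t _; exists (set_val t); last exact: clamp01_val.
  by rewrite /= in_itv /= unit_interval_bounds.
apply: continuous_compact; last exact: segment_compact.
exact/continuous_subspaceT/continuous_clamp01.
Qed.

Lemma locally_compact_unit_interval : locally_compact [set: II R].
Proof.
move=> x _; rewrite withinET; exists setT; first exact: filterT.
by split; [exact: compact_unit_interval | exact: closedT].
Qed.

Definition reverse01 t : II R := clamp01 (1 - set_val t).

Lemma reverse01_val t : set_val (reverse01 t) = 1 - set_val t.
Proof.
by rewrite clamp01_id // subr_ge0 gerBl; case/andP: (unit_interval_bounds t) => -> ->.
Qed.

Lemma continuous_reverse01 : continuous reverse01.
Proof.
move=> t; apply: continuous_comp; last exact: continuous_clamp01.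
apply: (@continuous_comp _ _ _ set_val (fun x : R => 1 - x)).
  exact: initial_continuous.
by apply: cvgD; [exact: cvg_cst | apply: cvgN; exact: cvg_id].
Qed.

End unit_interval.

Lemma homotopic_sym (R : realType) (Y Z : topologicalType) (f g : Y -> Z) :
  homotopic R f g -> homotopic R g f.
Proof.
case=> K [cK [K0 K1]]; exists (fun z : Y * II R => K (z.1, reverse01 z.2)); split.
  have crev : continuous (fun z : Y * II R => (z.1, reverse01 z.2)).
    apply: continuous_pair => z; first exact: cvg_fst.
    exact: (@continuous_comp _ _ _ snd reverse01 z cvg_snd (continuous_reverse01 _)).
  by move=> z; apply: continuous_comp (crev z) (cK _).
by split=> y t t_val; [apply: K1 | apply: K0]; rewrite reverse01_val t_val ?subr0 ?subrr.
Qed.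

Section loops.
Context {R : realType} {X : topologicalType} {x0 : X}.
Implicit Types (a : Omega R x0) (t : II R).

Lemma loop_at0 a t : set_val t = 0 -> set_val a t = x0.
Proof. by case: (set_valP a) => _ [+ _]; apply. Qed.

Lemma loop_at1 a t : set_val t = 1 -> set_val a t = x0.
Proof. by case: (set_valP a) => _ [_]; apply. Qed.

Lemma continuous_eval_loop :
  continuous (fun z : Omega R x0 * II R => set_val z.1 z.2).
Proof.
apply: continuous_eval_subspace; first exact: locally_compact_unit_interval.
  exact: uniform_regular.
by move=> f [].
Qed.

End loops.

Section whisker.
Context {R : realType} {X : topologicalType} {x0 : X} {g : II R -> X}.
Hypotheses (cg : continuous g) (g0 : forall t : II R, set_val t = 0 -> g t = x0).
Local Notation Omega := (Omega R x0).

(* [s - |8 t - s|] climbs from 0 to s on [0, s/8] and returns to 0 at s/4, and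
   at time s/4 the sped-up loop has not yet left x0. *)
Definition whiskered (a : Omega) (s t : II R) : X :=
  if set_val t <= set_val s / 4
  then g (clamp01 (set_val s - `|8 * set_val t - set_val s|))
  else set_val a (clamp01 ((1 + set_val s) * (set_val t - 2^-1) + 2^-1)).

Lemma continuous_whiskered :
  continuous (fun z : (Omega * II R) * II R => whiskered z.1.1 z.1.2 z.2).
Proof.
pose s (z : (Omega * II R) * II R) := set_val z.1.2.
pose t (z : (Omega * II R) * II R) := set_val z.2.
have cs : continuous s.
  move=> z; apply: (@continuous_comp _ _ _ (fun z : (Omega * II R) * II R => z.1.2)).
    exact: (continuous_comp cvg_fst cvg_snd).
  exact: initial_continuous.
have ct : continuous t.
  move=> z; apply: (@continuous_comp _ _ _ snd set_val); first exact: cvg_snd.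
  exact: initial_continuous.
have cloop : continuous (fun z : (Omega * II R) * II R => z.1.1).
  by move=> z; apply: (continuous_comp cvg_fst cvg_fst).
have head_arg : continuous (fun z => s z - `|8 * t z - s z|).
  move=> z; apply: cvgD; first exact: cs.
  apply: cvgN; apply: cvg_norm.
  by apply: cvgD; [apply: cvgM; [exact: cvg_cst | exact: ct] | apply: cvgN; exact: cs].
have tail_arg : continuous (fun z => (1 + s z) * (t z - 2^-1) + 2^-1).
  move=> z; apply: cvgD; last exact: cvg_cst.
  apply: cvgM; first by apply: cvgD; [exact: cvg_cst | exact: cs].
  by apply: cvgD; [exact: ct | exact: cvg_cst].
rewrite /whiskered; apply: (@continuous_if_le _ _ _ t (fun z => s z / 4)) => //.
- by move=> z; apply: cvgM; [exact: cs | exact: cvg_cst].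
- move=> z.
  exact: continuous_comp (continuous_comp (head_arg z) (continuous_clamp01 _)) (cg _).
- have tail_pair : continuous (fun z =>
      (z.1.1, clamp01 ((1 + s z) * (t z - 2^-1) + 2^-1))).
    apply: continuous_pair => // z.
    exact: continuous_comp (tail_arg z) (continuous_clamp01 _).
  by move=> z; exact: continuous_comp (tail_pair z) (continuous_eval_loop _).
- move=> z tz; rewrite /t /s in tz.
  have /andP[s0 s1] := unit_interval_bounds z.1.2.
  rewrite g0; last first.
    rewrite clamp01_le0 // tz (_ : 8 * _ - _ = set_val z.1.2) ?ger0_norm ?subrr //.
    lra.
  by rewrite loop_at0 // clamp01_le0 // tz; nra.
Qed.

Lemma whiskered_loop (a : Omega) (s : II R) :
  loops x0 (whiskered a s : {compact-open, II R -> X}).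
Proof.
have /andP[s0 s1] := unit_interval_bounds s.
split; last split.
- by have [_ cw] := continuous_curry continuous_whiskered; exact: cw (a, s).
- move=> t t0; rewrite /whiskered t0 ifT; last by rewrite divr_ge0.
  by rewrite g0 // clamp01_le0 // mulr0 sub0r normrN ger0_norm // subrr.
- move=> t t1; rewrite /whiskered t1 ifF; last by apply/negbTE; rewrite -ltNge; lra.
  by rewrite loop_at1 // clamp01_ge1 //; lra.
Qed.

Definition whisker (z : Omega * II R) : Omega :=
  SigSub (mem_set (whiskered_loop z.1 z.2)).

Lemma whiskerE (z : Omega * II R) t : set_val (whisker z) t = whiskered z.1 z.2 t.
Proof. by []. Qed.

Lemma continuous_whisker : continuous whisker.
Proof.
apply: continuous_comp_initial.
by have [+ _] := continuous_curry continuous_whiskered; move=> cw z; exact: cw z.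
Qed.

Lemma whisker_at0 (a : Omega) (s : II R) : set_val s = 0 -> whisker (a, s) = a.
Proof.
move=> s0; apply: val_inj; apply/funext => t.
have /andP[t0 t1] := unit_interval_bounds t.
rewrite -set_valE whiskerE /whiskered s0; case: ifPn => [t_le0 | _].
  rewrite g0; last by rewrite clamp01_le0 // sub0r oppr_le0.
  by rewrite loop_at0 //; lra.
by rewrite addr0 mul1r subrK clamp01_val.
Qed.

(* The inverse of the speed-up [t |-> (1 + s) (t - 1/2) + 1/2] in [whiskered]. *)
Definition unsqueeze (s : II R) (x : R) : II R :=
  clamp01 ((x - 2^-1) / (1 + set_val s) + 2^-1).

Lemma unsqueeze_val (s : II R) (x : R) : 0 <= x <= 1 ->
  set_val (unsqueeze s x) = (x - 2^-1) / (1 + set_val s) + 2^-1.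
Proof.
case/andP=> x_ge0 x_le1; have /andP[s0 s1] := unit_interval_bounds s.
rewrite /unsqueeze; set w := (x - 2^-1) / _; have ew : (1 + set_val s) * w = x - 2^-1.
  by rewrite /w mulrC divfK // gt_eqF //; lra.
clearbody w; rewrite clamp01_id //; apply/andP; split; nra.
Qed.

Lemma whiskered_unsqueeze (a : Omega) (s t : II R) : 0 < set_val t < 1 ->
  whiskered a s (unsqueeze s (set_val t)) = set_val a t.
Proof.
case/andP=> t0 t1; have /andP[s0 s1] := unit_interval_bounds s.
rewrite /whiskered unsqueeze_val; last by rewrite !ltW.
set w := (set_val t - 2^-1) / _; have ew : (1 + set_val s) * w = set_val t - 2^-1.
  by rewrite /w mulrC divfK // gt_eqF //; lra.
clearbody w.
rewrite ifN; last by rewrite -ltNge; nra.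
by rewrite addrK ew subrK clamp01_val.
Qed.

Lemma whisker_not_tf (a : Omega) (s : II R) :
  ~ tf a -> ~ tf (whisker (a, s)).
Proof.
move=> ntf_a tf_w; apply: ntf_a => u v uv.
have /andP[v0 v1] := unit_interval_bounds v.
have [v_0|v_pos] := eqVneq (set_val v) 0.
  by rewrite (loop_at0 a v) // (loop_at1 a u) // uv v_0 subr0.
have [v_1|v_lt1] := eqVneq (set_val v) 1.
  by rewrite (loop_at1 a v) // (loop_at0 a u) // uv v_1 subrr.
have v_in : 0 < set_val v < 1 by rewrite !lt_neqAle eq_sym v_pos v_lt1 v0 v1.
have u_in : 0 < set_val u < 1 by rewrite uv; lra.
rewrite -(whiskered_unsqueeze a s u u_in) -(whiskered_unsqueeze a s v v_in).
apply: tf_w; rewrite !unsqueeze_val ?uv; lra.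
Qed.

Context {u0 : II R} (gu0 : g u0 <> x0).

Lemma whisker_at1_not_tf (a : Omega) (s : II R) :
  set_val s = 1 -> ~ tf (whisker (a, s)).
Proof.
move=> s1 tf_w; have /andP[u00 u01] := unit_interval_bounds u0.
pose p := clamp01 (set_val u0 / 8); pose q := clamp01 (1 - set_val u0 / 8).
have p_val : set_val p = set_val u0 / 8 by rewrite clamp01_id //; apply/andP; split; lra.
have q_val : set_val q = 1 - set_val u0 / 8.
  by rewrite clamp01_id //; apply/andP; split; lra.
have wp : set_val (whisker (a, s)) p = g u0.
  rewrite whiskerE /whiskered /= s1 p_val ifT; last lra.
  by rewrite (_ : 1 - `|_| = set_val u0) ?clamp01_val // ler0_norm; lra.
have wq : set_val (whisker (a, s)) q = x0.
  rewrite whiskerE /whiskered /= s1 q_val ifF; last by apply/negbTE; rewrite -ltNge; lra.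
  by rewrite loop_at1 // clamp01_ge1 //; lra.
apply: gu0; rewrite -wp -[RHS]wq; apply: tf_w; rewrite p_val q_val; lra.
Qed.

Definition whisker1 (a : Omega) : Omega_ntf R x0 :=
  @SigSub Omega _ (~` @tf R X x0) (whisker (a, clamp01 1))
    (mem_set (whisker_at1_not_tf a (clamp01 1) (@clamp01_ge1 R 1 (lexx 1)))).

Lemma continuous_whisker1 : continuous whisker1.
Proof.
have c1 : continuous (fun a : Omega => (a, @clamp01 R 1)).
  by apply: continuous_pair => a; [exact: cvg_id | exact: cst_continuous].
apply: continuous_comp_initial => a.
exact: continuous_comp (c1 a) (continuous_whisker _).
Qed.

Lemma homotopic_val_whisker1 : homotopic R (set_val \o whisker1) idfun.
Proof.
apply: homotopic_sym; exists whisker; split; first exact: continuous_whisker.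
by split=> a t t_val /=; [exact: whisker_at0 | rewrite (unit_interval_val1 _ t_val)].
Qed.

Lemma homotopic_whisker1_val : homotopic R (whisker1 \o set_val) idfun.
Proof.
apply: homotopic_sym.
exists (fun z : Omega_ntf R x0 * II R =>
  @SigSub Omega _ (~` @tf R X x0) (whisker (set_val z.1, z.2))
    (mem_set (whisker_not_tf (set_val z.1) z.2 (set_mem (valP z.1))))).
split.
  have c1 : continuous (fun z : Omega_ntf R x0 * II R => (set_val z.1, z.2)).
    apply: continuous_pair => z; last exact: cvg_snd.
    apply: (@continuous_comp _ _ _ fst set_val); first exact: cvg_fst.
    exact: initial_continuous.
  apply: continuous_comp_initial => z.
  exact: continuous_comp (c1 z) (continuous_whisker _).
split=> b t t_val; apply: val_inj => /=.
  exact: whisker_at0.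
by rewrite (unit_interval_val1 _ t_val).
Qed.

End whisker.

Theorem lemma1 (R : realType) (X : topologicalType) (x0 : X)
  (hpath : exists g : II R -> X, is_path g /\
     (forall t : II R, set_val t = 0 -> g t = x0) /\
     (exists s t : II R, g s <> g t)) :
  @homotopy_equivalence R (@Omega_ntf R X x0) (@Omega R X x0) set_val.
Proof.
case: hpath => g [cg [g0 [s [t gst]]]].
have [u0 gu0] : exists u0, g u0 <> x0.
  have [gs|] := pselect (g s = x0); last by exists s.
  by exists t => gt; apply: gst; rewrite gs gt.
split; first exact: initial_continuous.
exists (whisker1 cg g0 gu0); split; first exact: continuous_whisker1.
by split; [exact: homotopic_whisker1_val | exact: homotopic_val_whisker1].
Qed.
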